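(* Let $a,b\ge1$, $\nu$ a permutation of $[a]$, and $x\in[a]\times[b]$. Let $A(i,j)=(a+1-i,\,b+1-j)$, and for $I\in J(\mathcal{Q}_{a,b})$ let $\mathbf{1}_I$ be the indicator function of $I$. Then $h(I)=\mathbf{1}_I(x)-\big(1-\mathbf{1}_I(A(x))\big)$ is $0$-mesic for $\mathcal{T}_\nu$ acting on $J(\mathcal{Q}_{a,b})$; that is, along every orbit the number of ideals containing $x$ equals the number of ideals not containing $A(x)$.
   Context: $J(P)$ is the set of order ideals of a finite poset $P$. Toggle: $\sigma_x(I)=I\cup\{x\}$ if $x\notin I$ and $I\cup\{x\}\in J(P)$; $I\setminus\{x\}$ if $x\in I$ and $I\setminus\{x\}\in J(P)$; $I$ otherwise. For a chain $C=\{x_1<\dots<x_m\}$, $\sigma_C=\sigma_{x_1}\circ\cdots\circ\sigma_{x_m}$. $\mathcal{Q}_{a,b}=[a]\times[b]$ with componentwise order; columns $C_c=\{(c,j): j\in[b]\}$; comotion $\mathcal{T}_\nu=\sigma_{C_{\nu(a)}}\circ\cdots\circ\sigma_{C_{\nu(1)}}$. A function is $0$-mesic for a permutation $\tau$ of a finite set if its average over every $\tau$-orbit is $0$. *)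

From HB Require Import structures.
From mathcomp Require Import all_boot all_order all_algebra all_fingroup.
Set Implicit Arguments. Unset Strict Implicit. Unset Printing Implicit Defensive.

(* Elements of Q_{a,b} = [a] x [b], 0-indexed: (i,j) : 'I_a * 'I_b
   stands for (i+1, j+1). Componentwise order. *)
Definition Qle (a b : nat) (x y : 'I_a * 'I_b) : bool :=
  (x.1 <= y.1)%N && (x.2 <= y.2)%N.

Definition is_ideal (a b : nat) (I : {set 'I_a * 'I_b}) : bool :=
  [forall y, forall z, ((y \in I) && Qle z y) ==> (z \in I)].

Definition toggle (a b : nat) (x : 'I_a * 'I_b) (I : {set 'I_a * 'I_b})
  : {set 'I_a * 'I_b} :=
  if x \notin I then (if is_ideal (x |: I) then x |: I else I)
  else (if is_ideal (I :\ x) then I :\ x else I).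

(* column toggle sigma_{C_c} = sigma_{(c,1)} o ... o sigma_{(c,b)} *)
Definition colToggle (a b : nat) (c : 'I_a) (I : {set 'I_a * 'I_b})
  : {set 'I_a * 'I_b} :=
  foldr (fun j J => toggle (c, j) J) I (enum 'I_b).

(* comotion T_nu = sigma_{C_{nu(a)}} o ... o sigma_{C_{nu(1)}} *)
Definition comotion (a b : nat) (nu : {perm 'I_a}) (I : {set 'I_a * 'I_b})
  : {set 'I_a * 'I_b} :=
  foldl (fun J i => colToggle (nu i) J) I (enum 'I_a).

Definition antipode (a b : nat) (x : 'I_a * 'I_b) : 'I_a * 'I_b :=
  (rev_ord x.1, rev_ord x.2).

Definition hstat (a b : nat) (x : 'I_a * 'I_b) (I : {set 'I_a * 'I_b}) : int :=
  ((x \in I)%:Z - (1 - (antipode x \in I)%:Z))%R.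

(* f is 0-mesic for the map tau on the orbits starting from ideals:
   the sum (equivalently, the average) of f over each tau-orbit is 0. *)
Definition zero_mesic_on_ideals (a b : nat)
  (tau : {set 'I_a * 'I_b} -> {set 'I_a * 'I_b})
  (f : {set 'I_a * 'I_b} -> int) : Prop :=
  forall I : {set 'I_a * 'I_b}, is_ideal I ->
    (\sum_(J : {set 'I_a * 'I_b} | fconnect tau I J) f J)%R = 0%R.

(* An order ideal of [a] x [b] is a staircase, i.e. a lattice path, i.e. a
   binary word with [a] ones and [b] zeros, which we read cyclically. Giving each
   column c a reading position E c, let its height be b minus the number of zeros
   the word read from E c has before its (c+1)-st one. Toggling column c when
   column c - 1 is read one position later and column c + 1 at the same position
   just advances the reading position of c. Choosing the positions according to
   the order in which comotion toggles the columns, comotion therefore advances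
   every position by one: it acts as a rotation of the word, of period a + b, and
   by counting every ideal arises in this way. Along a period, x is in the ideal
   iff a window of length M of the shifted word has more than x.1 ones, and A(x)
   is out of it iff a window of the same length starting elsewhere does; summed
   over all a + b shifts both counts agree. *)

From HB Require Import structures.
From mathcomp Require Import all_boot all_order all_algebra all_fingroup zify.
Set Implicit Arguments. Unset Strict Implicit. Unset Printing Implicit Defensive.

Lemma sum_bool_leq (P : nat -> bool) m n : \sum_(m <= i < n) (P i : nat) <= n - m.
Proof.
by rewrite -[n - m]muln1 -sum_nat_const_nat; apply: leq_sum => i _; apply: leq_b1.
Qed.

Lemma sum_periodic_shift (f : nat -> nat) n s : (forall i, f (i + n) = f i) ->
  \sum_(0 <= t < n) f (s + t) = \sum_(0 <= t < n) f t.
Proof.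
move=> f_periodic; elim: s => [|s IH]; first by under eq_bigr do rewrite add0n.
rewrite -IH; under eq_bigr do rewrite addSnnS.
have := @big_nat_recl _ 0 addn n 0 (fun t => f (s + t)) (leq0n _).
have := @big_nat_recr _ 0 addn n 0 (fun t => f (s + t)) (leq0n _).
by rewrite /= addn0 f_periodic; lia.
Qed.

Lemma eq_leq_thresholds x y n : x <= n -> y <= n ->
  (forall K, K < n -> (x <= K) = (y <= K)) -> x = y.
Proof.
move=> hx hy h; case: (ltngtP x y) => // lt.
- by have := h x; rewrite leqnn => /(_ (leq_trans lt hy)); lia.
- by have := h y; rewrite leqnn => /(_ (leq_trans lt hx)); lia.
Qed.

Section DecreasingPredicate.

Variable P : nat -> bool.
Hypothesis P_decr : forall i, P i.+1 -> P i.

Lemma decr_pred_leq i j : i <= j -> P j -> P i.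
Proof. by apply: (@homo_leq _ P (fun x y => y -> x)) => // y x z hxy hyz /hyz. Qed.

Lemma decr_pred_sum (n K : nat) : K < n -> P K = (K < \sum_(0 <= i < n) (P i : nat)).
Proof.
move=> hKn; rewrite (@big_cat_nat _ _ _ K.+1) //=.
case hK: (P K); apply/esym.
- rewrite (@eq_big_nat _ _ _ 0 K.+1 _ (fun _ => 1)) ?sum_nat_const_nat; first lia.
  by move=> i /andP [_ hi]; rewrite (decr_pred_leq (hi : i <= K) hK).
- rewrite big_nat_recr //= hK addn0 (@eq_big_nat _ _ _ K.+1 n _ (fun _ => 0)).
    by rewrite sum_nat_const_nat; have := sum_bool_leq P 0 K; lia.
  by move=> i /andP [hi _]; case hPi: (P i) => //; rewrite (decr_pred_leq (ltnW hi) hPi) in hK.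
Qed.

End DecreasingPredicate.

Section PeriodicOrbit.

Import GRing.Theory Num.Theory.

Variables (X : finType) (T : X -> X) (x : X).

Lemma iter_mul_period m q : iter m T x = x -> iter (q * m) T x = x.
Proof. by move=> hm; elim: q => [//|q IH]; rewrite mulSn iterD IH hm. Qed.

Lemma iter_order_period n : 0 < n -> iter n T x = x ->
  iter (fingraph.order T x) T x = x.
Proof. by move=> n_gt0 hn; apply/(@orbitPcycle _ T x 3 4); exists n.-1; rewrite prednK. Qed.

Lemma order_dvdn_period n : 0 < n -> iter n T x = x -> fingraph.order T x %| n.
Proof.
move=> n_gt0 hn; set m := fingraph.order T x.
have hm : iter m T x = x := iter_order_period n_gt0 hn.
have : iter (n %/ m * m + n %% m) T x = x by rewrite -divn_eq.
rewrite addnC iterD iter_mul_period // => hmod.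
by rewrite /dvdn -(findex_iter (ltn_pmod n (fingraph.order_gt0 T x))) hmod findex0.
Qed.

Variables (R : numDomainType) (F : X -> R).

Lemma sum_iter_period m q : iter m T x = x ->
  (\sum_(0 <= t < q * m) F (iter t T x) = (\sum_(0 <= t < m) F (iter t T x)) *+ q)%R.
Proof.
move=> hm; elim: q => [|q IH]; first by rewrite mul0n big_geq.
rewrite mulSn addnC (@big_cat_nat _ _ _ (q * m)) ?leq_addr //= IH mulrSr.
congr (_ + _)%R; rewrite -{1}(add0n (q * m)) big_addn addKn.
by apply: eq_bigr => t _; rewrite iterD iter_mul_period.
Qed.

Lemma sum_orbit_iter :
  (\sum_(y | fconnect T x y) F y = \sum_(0 <= t < fingraph.order T x) F (iter t T x))%R.
Proof.
rewrite (eq_bigl (mem (fingraph.orbit T x))) => [|y]; last by rewrite fconnect_orbit.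
rewrite -big_uniq ?orbit_uniq // (big_nth x) /fingraph.orbit size_traject.
by apply: eq_big_nat => t /andP [_ ht]; rewrite nth_traject.
Qed.

Lemma sum_fconnect_eq0 n : 0 < n -> iter n T x = x ->
  (\sum_(0 <= t < n) F (iter t T x) = 0 -> \sum_(y | fconnect T x y) F y = 0)%R.
Proof.
move=> n_gt0 hn; have /divnK def_n := order_dvdn_period n_gt0 hn.
rewrite -def_n sum_iter_period ?(iter_order_period n_gt0 hn) // -sum_orbit_iter.
move=> /eqP; rewrite mulrn_eq0.
by case/orP => [/eqP q0|/eqP //]; move: n_gt0; rewrite -def_n q0.
Qed.

End PeriodicOrbit.

Section Windows.

Variable W : nat -> bool.

Definition ones k m := \sum_(k <= i < k + m) (W i : nat).

Lemma onesD k m1 m2 : ones k (m1 + m2) = ones k m1 + ones (k + m1) m2.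
Proof. by rewrite /ones addnA (@big_cat_nat _ _ _ (k + m1)) //=; lia. Qed.

Lemma ones0 k : ones k 0 = 0.
Proof. by rewrite /ones addn0 big_geq. Qed.

Lemma ones1 k : ones k 1 = W k.
Proof. by rewrite /ones addn1 big_nat1. Qed.

Lemma onesS k m : ones k m.+1 = W k + ones k.+1 m.
Proof. by rewrite -add1n onesD ones1 addn1. Qed.

Lemma onesSr k m : ones k m.+1 = ones k m + W (k + m).
Proof. by rewrite -addn1 onesD ones1. Qed.

Lemma ones_leq k m : ones k m <= m.
Proof. by have := sum_bool_leq W k (k + m); rewrite addKn. Qed.

Lemma leq_ones k m1 m2 : m1 <= m2 -> ones k m1 <= ones k m2.
Proof. by move=> h; rewrite -(subnKC h) onesD leq_addr. Qed.

(* The number of zeros, truncated at [b], that [W] read from position [m]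
   has before its [c.+1]-st one. *)
Definition zeros_before b c m := \sum_(0 <= i < b) (ones m (c.+1 + i) <= c : nat).

Lemma zeros_before_leq b c m K : K < b ->
  (zeros_before b c m <= K) = (c < ones m (c.+1 + K)).
Proof.
move=> hK; rewrite leqNgt /zeros_before.
rewrite -(@decr_pred_sum (fun i => ones m (c.+1 + i) <= c)) // -?ltnNge //.
by move=> i; apply: leq_trans; apply: leq_ones; rewrite addnS.
Qed.

Lemma zeros_before_leb b c m : zeros_before b c m <= b.
Proof. by have := sum_bool_leq (fun i => ones m (c.+1 + i) <= c) 0 b; rewrite subn0. Qed.

Lemma leq_zeros_before b c m : zeros_before b c m <= zeros_before b c.+1 m.
Proof.
apply: leq_sum => i _.
have h : ones m (c.+2 + i) <= (ones m (c.+1 + i)).+1.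
  by rewrite addSn onesSr; case: (W _); rewrite /= ?addn0 ?addn1.
by case: (leqP (ones m (c.+1 + i)) c) => /=; case: leqP => /=; lia.
Qed.

Lemma zeros_before0 b m : 0 < b -> (zeros_before b 0 m == 0) = W m.
Proof. by move=> hb; rewrite -leqn0 zeros_before_leq // addn0 ones1 lt0b. Qed.

Lemma zeros_before_one b c m : W m -> zeros_before b c m.+1 = zeros_before b c.+1 m.
Proof.
by move=> hW; apply: eq_bigr => i _; rewrite (addSn c.+1) onesS hW add1n ltnS.
Qed.

Section Periodic.

Variable n : nat.
Hypothesis W_periodic : forall i, W (i + n) = W i.

Lemma ones_periodic k m : ones (k + n) m = ones k m.
Proof.
elim: m => [|m IH]; first by rewrite !ones0.
by rewrite !onesSr IH addnAC W_periodic.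
Qed.

Lemma ones_period k : ones k n = ones 0 n.
Proof.
elim: k => [//|k <-].
by have := onesS k n; rewrite onesSr addnC W_periodic; lia.
Qed.

Lemma zeros_before_periodic b c m : zeros_before b c (m + n) = zeros_before b c m.
Proof. by apply: eq_bigr => i _; rewrite ones_periodic. Qed.

End Periodic.

End Windows.

Section BalancedWord.

Variables (a b : nat) (W : nat -> bool).
Hypothesis W_periodic : forall i, W (i + (a + b)) = W i.
Hypothesis W_ones : ones W 0 (a + b) = a.
Hypothesis b_gt0 : 0 < b.

Lemma ones_window_geq k L : L <= a + b -> L - b <= ones W k L.
Proof.
move=> hL; have := onesD W k L (a + b - L).
by rewrite subnKC // ones_period // W_ones; have := ones_leq W (k + L) (a + b - L); lia.
Qed.

Lemma zeros_before_zero c m : c < a -> ~~ W m ->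
  zeros_before W b c m = (zeros_before W b c m.+1).+1.
Proof.
move=> hc /negbTE hW.
have shift t : ones W m t.+1 = ones W m.+1 t by rewrite onesS hW.
have last_gt : (ones W m.+1 (c.+1 + b.-1) <= c) = false.
  apply/negbTE; rewrite -ltnNge -shift -addSn.
  by have := @ones_window_geq m (c.+2 + b.-1); lia.
rewrite /zeros_before -(prednK b_gt0) [in RHS]big_nat_recr //= last_gt addn0.
rewrite big_nat_recl // addn0 shift ones_leq add1n; congr _.+1.
by apply: eq_big_nat => i _; rewrite addnS shift.
Qed.

Lemma zeros_before_last m : 0 < a -> W m -> zeros_before W b a.-1 m.+1 = b.
Proof.
move=> ha hW; rewrite /zeros_before (@eq_big_nat _ _ _ 0 b _ (fun _ => 1)).
  by rewrite sum_nat_const_nat muln1 subn0.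
move=> i /andP [_ hi].
have hfull : ones W m.+1 (a + b).-1 = a.-1.
  have := onesS W m (a + b).-1; rewrite prednK ?addn_gt0 ?ha //.
  by rewrite ones_period // W_ones hW; lia.
suff : ones W m.+1 (a.-1.+1 + i) <= ones W m.+1 (a + b).-1 by rewrite hfull => ->.
by apply: leq_ones; lia.
Qed.

Lemma zeros_before_adj c m : c.+1 < a ->
  zeros_before W b c m.+1 <= zeros_before W b c.+1 m.
Proof.
move=> hc; case hW: (W m); first by rewrite zeros_before_one.
apply: leq_trans (leq_zeros_before W b c m).
by rewrite (@zeros_before_zero c m) ?hW ?(ltnW hc).
Qed.

End BalancedWord.

Section Staircase.

Variables a b : nat.

Definition stair (k : nat -> nat) : {set 'I_a * 'I_b} :=
  [set y : 'I_a * 'I_b | y.2 < k y.1].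

Definition update (k : nat -> nat) c v i := if i == c then v else k i.

Definition left_height k c := if c == 0 then b else k c.-1.
Definition right_height k c := if c.+1 == a then 0 else k c.+1.

Definition nonincr (k : nat -> nat) := forall i, i.+1 < a -> k i.+1 <= k i.

Lemma nonincr_leq k i j : nonincr k -> i <= j -> j < a -> k j <= k i.
Proof.
move=> hk hij; elim: j hij => [|j IH]; first by rewrite leqn0 => /eqP ->.
rewrite leq_eqVlt => /orP [/eqP -> //|hij] hj.
exact: leq_trans (hk _ hj) (IH hij (ltnW hj)).
Qed.

Lemma stair_ideal k : nonincr k -> is_ideal (stair k).
Proof.
move=> hk; apply/forallP => y; apply/forallP => z; apply/implyP => /andP [].
rewrite !inE /Qle => hy /andP [h1 h2].
exact: leq_ltn_trans h2 (leq_trans hy (nonincr_leq hk h1 (ltn_ord _))).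
Qed.

Lemma eq_stair k k' : (forall i, i < a -> k i = k' i) -> stair k = stair k'.
Proof. by move=> h; apply/setP => y; rewrite !inE h. Qed.

Lemma stair_update_same k c : stair (update k c (k c)) = stair k.
Proof. by apply: eq_stair => i _; rewrite /update; case: eqP => // ->. Qed.

Lemma stair_update_update k c v w :
  stair (update (update k c v) c w) = stair (update k c w).
Proof. by apply: eq_stair => i _; rewrite /update; case: eqP. Qed.

Lemma left_height_update k c v : left_height (update k c v) c = left_height k c.
Proof. by rewrite /left_height /update; case: eqP => // ne; case: eqP => //; lia. Qed.

Lemma right_height_update k c v : right_height (update k c v) c = right_height k c.
Proof. by rewrite /right_height /update; case: eqP => // ne; case: eqP => //; lia. Qed.

Lemma nonincr_update k c v : nonincr k -> c < a ->
  right_height k c <= v -> v <= left_height k c -> nonincr (update k c v).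
Proof.
rewrite /right_height /left_height /update => hk hc hr hl i hi.
case: (eqVneq i.+1 c) hl => [<- /= hl|ne _]; first by rewrite ltn_eqF.
case: (eqVneq i c) hr => [<- hr|_ _]; last exact: hk.
by rewrite (ltn_eqF hi) in hr.
Qed.

Lemma nonideal_witness (S : {set 'I_a * 'I_b}) y z :
  y \in S -> Qle z y -> z \notin S -> ~~ is_ideal S.
Proof.
move=> hy hzy hz; apply/negP => /forallP /(_ y) /forallP /(_ z) /implyP.
by rewrite hy hzy => /(_ isT); apply/negP.
Qed.

Lemma stair_add (k : nat -> nat) (c : 'I_a) (t : 'I_b) : t = k c :> nat ->
  (c, t) |: stair k = stair (update k c (k c).+1).
Proof.
move=> e; apply/setP => [[i j]]; rewrite !inE /update /= xpair_eqE -!val_eqE /=.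
by case: (eqVneq (i : nat) c) => [->|] //=; rewrite -e; lia.
Qed.

Lemma stair_del (k : nat -> nat) (c : 'I_a) (t : 'I_b) : t.+1 = k c :> nat ->
  stair k :\ (c, t) = stair (update k c (k c).-1).
Proof.
move=> e; apply/setP => [[i j]]; rewrite !inE /update /= xpair_eqE -!val_eqE /=.
by case: (eqVneq (i : nat) c) => [->|] //=; rewrite -e /=; case: (ltngtP j t); lia.
Qed.

Section ToggleStair.

Variable k : nat -> nat.
Hypothesis k_nonincr : nonincr k.
Hypothesis k_le_b : forall i, i < a -> k i <= b.

Lemma right_height_leq (c : 'I_a) : right_height k c <= k c.
Proof.
by rewrite /right_height; case: eqP => // ne; apply: k_nonincr; have := ltn_ord c; lia.
Qed.

Lemma left_height_geq (c : 'I_a) : k c <= left_height k c.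
Proof.
rewrite /left_height; case: eqP => [_|ne]; first exact: k_le_b.
by have := k_nonincr (i := c.-1); have := ltn_ord c; rewrite prednK; lia.
Qed.

Lemma stair_add_nonideal (c : 'I_a) (t : 'I_b) : k c <= t ->
  ~~ ((t == k c :> nat) && (k c < left_height k c)) ->
  ~~ is_ideal ((c, t) |: stair k).
Proof.
rewrite leq_eqVlt => /orP [/eqP e|hlt] hno.
- move: hno; rewrite -e eqxx /= -leqNgt /left_height.
  case: eqP => [_ hbt|/eqP hc0 hle]; first by have := ltn_ord t; lia.
  have hc1 : c.-1 < a by have := ltn_ord c; lia.
  apply: (@nonideal_witness _ (c, t) (Ordinal hc1, t)).
  + by rewrite !inE eqxx.
  + by rewrite /Qle /=; lia.
  + by rewrite !inE /= xpair_eqE -!val_eqE /=; lia.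
- have ht1 : t.-1 < b by have := ltn_ord t; lia.
  apply: (@nonideal_witness _ (c, t) (c, Ordinal ht1)).
  + by rewrite !inE eqxx.
  + by rewrite /Qle /=; lia.
  + by rewrite !inE /= xpair_eqE -!val_eqE /=; lia.
Qed.

Lemma stair_del_nonideal (c : 'I_a) (t : 'I_b) : t < k c ->
  ~~ ((t.+1 == k c) && (right_height k c < k c)) ->
  ~~ is_ideal (stair k :\ (c, t)).
Proof.
rewrite leq_eqVlt => /orP [/eqP e|hlt] hno.
- move: hno; rewrite e eqxx /= -leqNgt /right_height.
  case: eqP => [_|/eqP hca hge]; first by lia.
  have hc1 : c.+1 < a by have := ltn_ord c; lia.
  apply: (@nonideal_witness _ (Ordinal hc1, t) (c, t)).
  + by rewrite !inE /= xpair_eqE -!val_eqE /=; lia.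
  + by rewrite /Qle /=; lia.
  + by rewrite !inE eqxx.
- have ht1 : t.+1 < b by have := k_le_b (ltn_ord c); lia.
  apply: (@nonideal_witness _ (c, Ordinal ht1) (c, t)).
  + by rewrite !inE /= xpair_eqE -!val_eqE /=; lia.
  + by rewrite /Qle /=; lia.
  + by rewrite !inE eqxx.
Qed.

Definition toggled_height (c t : nat) :=
  if (t == k c) && (k c < left_height k c) then (k c).+1
  else if (t.+1 == k c) && (right_height k c < k c) then (k c).-1 else k c.

Lemma toggle_stair (c : 'I_a) (t : 'I_b) :
  toggle (c, t) (stair k) = stair (update k c (toggled_height c t)).
Proof.
have hr := right_height_leq c; have hl := left_height_geq c.
rewrite /toggle /toggled_height inE /=; case: ltnP => htk /=.
- rewrite (_ : (t == k c :> nat) = false) /=; last by apply/eqP; lia.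
  case: (boolP ((t.+1 == k c) && (right_height k c < k c))) => [/andP [/eqP e hlt]|hno].
    by rewrite stair_del // stair_ideal //; apply: nonincr_update => //; lia.
  by rewrite (negbTE (stair_del_nonideal htk hno)) stair_update_same.
- case: (boolP ((t == k c :> nat) && (k c < left_height k c))) => [/andP [/eqP e hlt]|hno].
    by rewrite stair_add // stair_ideal //; apply: nonincr_update => //; lia.
  rewrite (_ : (t.+1 == k c) = false) /=; last by apply/eqP; lia.
  by rewrite (negbTE (stair_add_nonideal htk hno)) stair_update_same.
Qed.

End ToggleStair.

End Staircase.

Arguments stair : clear implicits.

Section ColumnToggle.

Variables (a b : nat) (k : nat -> nat).
Hypothesis k_nonincr : nonincr a k.
Hypothesis k_le_b : forall i, i < a -> k i <= b.

(* The new height of column [c] once its cells [t], ..., [b - 1] have been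
   toggled, from the top down. *)
Definition col_suffix_height (c t : nat) :=
  if k c < left_height b k c then (if t <= k c then (k c).+1 else k c)
  else minn (k c) (maxn t (right_height a k c)).

Lemma toggle_col_suffix (c : 'I_a) (s : seq 'I_b) t : map val s = iota t (b - t) ->
  foldr (fun j J => toggle (c, j) J) (stair a b k) s =
  stair a b (update k c (col_suffix_height c t)).
Proof.
have hr := right_height_leq k_nonincr c; have hl := left_height_geq k_nonincr k_le_b c.
have hkb := k_le_b (ltn_ord c).
have hlb : left_height b k c <= b.
  by rewrite /left_height; case: eqP => // ne; apply: k_le_b; have := ltn_ord c; lia.
elim: s t => [|j s IH] t /=.
  move=> /esym /(congr1 size); rewrite size_iota /= => e.
  rewrite -{1}(stair_update_same a b k c) /col_suffix_height.
  by congr (stair a b (update k c _)); do 2?case: ifP => ?; lia.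
case e: (b - t) => [//|n] [ej es].
have {}es : map val s = iota t.+1 (b - t.+1) by rewrite es; congr iota; lia.
set v := col_suffix_height c t.+1.
have hvr : right_height a k c <= v by rewrite /v /col_suffix_height; do 2?case: ifP; lia.
have hvl : v <= left_height b k c by rewrite /v /col_suffix_height; do 2?case: ifP; lia.
rewrite (IH t.+1 es) toggle_stair; first last.
- by move=> i hi; rewrite /update; case: eqP => _; [lia | exact: k_le_b].
- exact: (nonincr_update (b := b) k_nonincr (ltn_ord c)).
rewrite stair_update_update; congr (stair a b (update k c _)).
rewrite /toggled_height left_height_update right_height_update /update eqxx ej.
by move: hvr hvl; rewrite /v /col_suffix_height; do ![case: ifP => ?]; lia.
Qed.

Lemma colToggle_stair (c : 'I_a) :
  colToggle c (stair a b k) = stair a b (update k c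
    (if k c < left_height b k c then (k c).+1 else right_height a k c)).
Proof.
rewrite /colToggle (@toggle_col_suffix c (enum 'I_b) 0) ?val_enum_ord ?subn0 //.
have hr := right_height_leq k_nonincr c.
by congr (stair a b (update k c _)); rewrite /col_suffix_height; case: ifP => //; lia.
Qed.

End ColumnToggle.

Section Offsets.

Variable a : nat.

Definition admissible_offsets (E : nat -> nat) :=
  forall d, d.+1 < a -> E d.+1 <= E d <= (E d.+1).+1.

Variable nu : {perm 'I_a}.

(* The step at which [comotion nu] toggles column [c]; junk value [0] for [c >= a]. *)
Definition toggle_time (c : nat) : nat :=
  if insub c is Some o then val ((nu^-1)%g o) else 0.

Lemma toggle_time_perm (o : 'I_a) : toggle_time (nu o) = o.
Proof. by rewrite /toggle_time valK permK. Qed.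

Lemma toggle_time_lt c : c < a -> toggle_time c < a.
Proof. by rewrite /toggle_time; case: insubP => [o _ _|/negP //] _; apply: ltn_ord. Qed.

Lemma toggle_time_inj c c' : c < a -> c' < a ->
  toggle_time c = toggle_time c' -> c = c'.
Proof.
rewrite /toggle_time; case: insubP => [o _ <-|/negP //] _.
by case: insubP => [o' _ <-|/negP //] _ /val_inj /perm_inj ->.
Qed.

Definition comotion_offsets (E : nat -> nat) :=
  forall d, d.+1 < a -> E d = E d.+1 + (toggle_time d.+1 < toggle_time d).

Lemma comotion_offsets_shift E t :
  comotion_offsets E -> comotion_offsets (fun c => E c + t).
Proof. by move=> hE d hd; rewrite hE //; lia. Qed.

Lemma comotion_offsets_admissible E : comotion_offsets E -> admissible_offsets E.
Proof. by move=> hE d hd; rewrite (hE d hd); case: (_ < _) => /=; lia. Qed.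

Lemma comotion_offsets_prefix_admissible E i : comotion_offsets E ->
  admissible_offsets (fun c => E c + (toggle_time c < i)).
Proof.
move=> hE c hc; rewrite (hE c hc).
have := @toggle_time_inj c c.+1 (ltnW hc) hc.
case: (ltngtP (toggle_time c.+1) (toggle_time c)) => [||/esym/[swap]/[apply]]; last lia;
  by case: (ltnP (toggle_time c) i); case: (ltnP (toggle_time c.+1) i); lia.
Qed.

Lemma comotion_offsets_left E (o : 'I_a) : comotion_offsets E -> nu o != 0 :> nat ->
  E (nu o).-1 + (toggle_time (nu o).-1 < o) = (E (nu o)).+1.
Proof.
move=> hE hc0; have hc : (nu o).-1.+1 < a by rewrite prednK ?lt0n.
rewrite hE // prednK ?lt0n // toggle_time_perm.
have ne : toggle_time (nu o).-1 != o.
  apply/eqP => e; have := @toggle_time_inj _ _ (ltnW hc) (ltn_ord (nu o)).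
  by rewrite toggle_time_perm => /(_ e); lia.
by move: ne; case: (ltngtP (toggle_time (nu o).-1) o) => //=; lia.
Qed.

Lemma comotion_offsets_right E (o : 'I_a) : comotion_offsets E -> (nu o).+1 < a ->
  E (nu o).+1 + (toggle_time (nu o).+1 < o) = E (nu o).
Proof.
move=> hE hc; rewrite (hE _ hc) toggle_time_perm.
have ne : toggle_time (nu o).+1 != o.
  apply/eqP => e; have := @toggle_time_inj _ _ hc (ltn_ord (nu o)).
  by rewrite toggle_time_perm => /(_ e); lia.
by move: ne; case: (ltngtP (toggle_time (nu o).+1) o) => //=; lia.
Qed.

(* For [c < a] the sum is at most [c], so the subtraction does not truncate. *)
Definition base_offsets c := a - \sum_(0 <= d < c) (toggle_time d.+1 < toggle_time d : nat).

Lemma base_offsets_comotion : comotion_offsets base_offsets.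
Proof.
move=> d hd; rewrite /base_offsets big_nat_recr //=.
by have := sum_bool_leq (fun d => toggle_time d.+1 < toggle_time d) 0 d; case: ltnP; lia.
Qed.

End Offsets.

Section WordIdeal.

Variables (a b : nat) (W : nat -> bool).
Hypothesis W_periodic : forall i, W (i + (a + b)) = W i.
Hypothesis W_ones : ones W 0 (a + b) = a.
Hypothesis b_gt0 : 0 < b.

Definition word_height c m := b - zeros_before W b c m.

Definition word_ideal (E : nat -> nat) := stair a b (fun c => word_height c (E c)).

Lemma word_height_nonincr E : admissible_offsets a E ->
  nonincr a (fun c => word_height c (E c)).
Proof.
move=> hE c hc; rewrite /word_height leq_sub2l //.
have /andP [h1 h2] := hE c hc.
case: (ltngtP (E c) (E c.+1)) => [|/esym e|->]; [lia | |exact: leq_zeros_before].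
by rewrite (_ : E c = (E c.+1).+1); [exact: zeros_before_adj | lia].
Qed.

Lemma word_ideal_ideal E : admissible_offsets a E -> is_ideal (word_ideal E).
Proof. by move=> hE; apply/stair_ideal/word_height_nonincr. Qed.

(* The update rule of [colToggle_stair] when column [c - 1] is read one position
   later than column [c] and column [c + 1] at the same position: the new height
   is the height of column [c] read one position later. *)
Lemma word_height_step c m : c < a ->
  (if word_height c m < (if c == 0 then b else word_height c.-1 m.+1)
   then (word_height c m).+1
   else if c.+1 == a then 0 else word_height c.+1 m) = word_height c m.+1.
Proof.
move=> hc; rewrite /word_height; have hzb := zeros_before_leb W b c m.
case hW: (W m).
- have -> : (b - zeros_before W b c m < (if c == 0 then b else
      b - zeros_before W b c.-1 m.+1)) = false.
    case: eqP => [->|ne].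
      by move: (zeros_before0 W m b_gt0); rewrite hW => /eqP ->; lia.
    by rewrite zeros_before_one // prednK ?ltnn //; lia.
  case: eqP => [ea|ne]; last by rewrite zeros_before_one.
  by rewrite (_ : c = a.-1) ?zeros_before_last ?subnn //; lia.
- have hz := zeros_before_zero W_periodic W_ones b_gt0 (m := m) hc (negbT hW).
  rewrite hz ifT; first lia.
  case: eqP => [_|ne]; first lia.
  have := zeros_before_zero W_periodic W_ones b_gt0 (m := m)
    (leq_ltn_trans (leq_pred c) hc) (negbT hW).
  have := leq_zeros_before W b c.-1 m; rewrite prednK; lia.
Qed.

Lemma colToggle_word_ideal E (c : 'I_a) : admissible_offsets a E ->
  (c != 0 :> nat -> E c.-1 = (E c).+1) -> (c.+1 < a -> E c.+1 = E c) ->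
  colToggle c (word_ideal E) = word_ideal (update E c (E c).+1).
Proof.
move=> hE hl hr; rewrite /word_ideal colToggle_stair; last 2 first.
- exact: word_height_nonincr.
- by move=> i _; rewrite /word_height leq_subr.
apply: eq_stair => i hi; rewrite /update; case: eqP => [->|//].
rewrite -word_height_step // /left_height /right_height.
have -> : (if c.+1 == a then 0 else word_height c.+1 (E c.+1)) =
          (if c.+1 == a then 0 else word_height c.+1 (E c)).
  by case: eqP => // ne; rewrite hr //; have := ltn_ord c; lia.
by case: eqP => [//|/eqP/hl ->].
Qed.

Lemma word_ideal_periodic E : word_ideal (fun c => E c + (a + b)) = word_ideal E.
Proof. by apply: eq_stair => c _; rewrite /word_height zeros_before_periodic. Qed.

Lemma mem_word_ideal E (x : 'I_a * 'I_b) :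
  (x \in word_ideal E) = (x.1 < ones W (E x.1) (x.1.+1 + (b - x.2.+1))).
Proof.
have hx2 := ltn_ord x.2.
rewrite inE /word_height -(@zeros_before_leq W b _ _ (b - x.2.+1)); last by lia.
by have := zeros_before_leb W b x.1 (E x.1); lia.
Qed.

Lemma mem_corner_word_ideal E (y : 'I_a * 'I_b) : y.1 = 0 :> nat -> y.2 = b.-1 :> nat ->
  (y \in word_ideal E) = W (E 0).
Proof. by move=> y1 y2; rewrite mem_word_ideal y1 y2 prednK // subnn ones1 lt0b. Qed.

(* A window of length [a + b] holds exactly [a] ones, so the antipodal cell is
   decided by the complementary window. *)
Lemma mem_antipode_word_ideal E (x : 'I_a * 'I_b) :
  let M := x.1.+1 + (b - x.2.+1) in
  (antipode x \in word_ideal E) = ~~ (x.1 < ones W (E (a - x.1.+1) + (a + b - M)) M).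
Proof.
move=> M; have hx1 := ltn_ord x.1; have hx2 := ltn_ord x.2.
rewrite mem_word_ideal /= (_ : _ + (b - _) = a + b - M); last by rewrite /M; lia.
have := onesD W (E (a - x.1.+1)) (a + b - M) M.
rewrite subnK ?(ones_period W_periodic) ?W_ones; last by rewrite /M; lia.
by have := ones_leq W (E (a - x.1.+1)) (a + b - M); lia.
Qed.

Lemma sum_hstat_period (E : nat -> nat) x :
  (\sum_(0 <= t < a + b) hstat x (word_ideal (fun c => (E c + t)%N)))%R = 0%R.
Proof.
set M := x.1.+1 + (b - x.2.+1).
pose f m := (x.1 < ones W m M : nat).
have f_periodic i : f (i + (a + b)) = f i by rewrite /f ones_periodic.
have hstatE t : hstat x (word_ideal (fun c => E c + t)) =
    ((f (E x.1 + t)%N)%:Z - (f (E (a - x.1.+1) + (a + b - M) + t)%N)%:Z)%R.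
  rewrite /hstat mem_word_ideal mem_antipode_word_ideal -/M /f addnAC.
  by case: (_ < _); case: (_ < _).
under eq_bigr do rewrite hstatE.
rewrite GRing.sumrB -!(big_morph Posz PoszD (erefl (Posz 0))).
by rewrite !sum_periodic_shift // GRing.subrr.
Qed.

Variable nu : {perm 'I_a}.

Lemma comotion_prefix E i : comotion_offsets nu E -> i <= a ->
  foldl (fun J j => colToggle (nu j) J) (word_ideal E) (take i (enum 'I_a)) =
  word_ideal (fun c => E c + (toggle_time nu c < i)).
Proof.
move=> hE; elim: i => [|i IH] hi.
  by rewrite take0; apply: eq_stair => c _; rewrite addn0.
have hsz : i < size (enum 'I_a) by rewrite size_enum_ord.
rewrite (take_nth (Ordinal hi) hsz) foldl_rcons IH 1?ltnW //.
set o := nth _ _ i; have vo : o = i :> nat by rewrite /o nth_enum_ord.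
rewrite colToggle_word_ideal; first last.
- by move=> hc; rewrite toggle_time_perm vo ltnn addn0 -vo comotion_offsets_right.
- by move=> hc; rewrite toggle_time_perm vo ltnn addn0 -vo comotion_offsets_left.
- exact: comotion_offsets_prefix_admissible.
apply: eq_stair => c hc; rewrite /update toggle_time_perm vo ltnn addn0.
case: eqP => [->|ne]; first by rewrite toggle_time_perm vo ltnSn addn1.
have ti : toggle_time nu c != i.
  apply/eqP => e; apply: ne; apply: (toggle_time_inj (nu := nu)) hc (ltn_ord _) _.
  by rewrite toggle_time_perm vo.
by rewrite (ltnS (toggle_time nu c) i) (leq_eqVlt (toggle_time nu c)) (negbTE ti).
Qed.

Lemma comotion_word_ideal E : comotion_offsets nu E ->
  comotion nu (word_ideal E) = word_ideal (fun c => (E c).+1).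
Proof.
move=> hE; rewrite /comotion -(take_size (enum 'I_a)) size_enum_ord comotion_prefix //.
apply: eq_stair => c hc; rewrite /word_height.
by move: (toggle_time_lt nu hc) => ->; rewrite addn1.
Qed.

Lemma iter_comotion_word_ideal E t : comotion_offsets nu E ->
  iter t (comotion nu) (word_ideal E) = word_ideal (fun c => E c + t).
Proof.
move=> hE; elim: t => [|t IH] /=; first by apply: eq_stair => c _; rewrite addn0.
rewrite IH comotion_word_ideal; last exact: comotion_offsets_shift.
by apply: eq_stair => c _; rewrite addnS.
Qed.

End WordIdeal.

Section CyclicWord.

Variables (n : nat) (w : {ffun 'I_n -> bool}).

Definition cyclic_word (i : nat) : bool := [exists j : 'I_n, (val j == i %% n) && w j].

Lemma cyclic_word_ord (j : 'I_n) : cyclic_word j = w j.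
Proof.
apply/existsP/idP => [[j' /andP [/eqP e hw]]|hw]; last by exists j; rewrite modn_small ?eqxx.
by move: e; rewrite modn_small // => /val_inj <-.
Qed.

Lemma cyclic_word_periodic i : cyclic_word (i + n) = cyclic_word i.
Proof. by rewrite /cyclic_word modnDr. Qed.

Lemma cyclic_word_mul_period i q : cyclic_word (i + q * n) = cyclic_word i.
Proof. by rewrite /cyclic_word addnC modnMDl. Qed.

Lemma ones_cyclic_word : ones cyclic_word 0 n = \sum_(j < n) (w j : nat).
Proof. by rewrite /ones add0n big_mkord; apply: eq_bigr => j _; rewrite cyclic_word_ord. Qed.

End CyclicWord.

Definition has_ones n (w : {ffun 'I_n -> bool}) k := \sum_(j < n) (w j : nat) == k.

Section HeightsWord.

Variables (a b : nat) (h : nat -> nat).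
Hypothesis h_nonincr : nonincr a h.
Hypothesis h_le_b : forall c, c < a -> h c <= b.

(* Position of the [c.+1]-st one in the lattice path word of the staircase [h]. *)
Definition one_pos c := b - h c + c.

Definition heights_word : {ffun 'I_(a + b) -> bool} :=
  [ffun i : 'I_(a + b) => [exists c : 'I_a, i == one_pos c :> nat]].

Lemma one_pos_lt c c' : c < c' -> c' < a -> one_pos c < one_pos c'.
Proof.
move=> hcc' hc'; have := nonincr_leq h_nonincr (ltnW hcc') hc'.
by have := h_le_b hc'; have := h_le_b (ltn_trans hcc' hc'); rewrite /one_pos; lia.
Qed.

Lemma one_pos_inj (c c' : 'I_a) : one_pos c = one_pos c' -> c = c'.
Proof.
move=> e; apply: val_inj; case: (ltngtP c c') => // lt.
- by have := one_pos_lt lt (ltn_ord c'); rewrite e ltnn.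
- by have := one_pos_lt lt (ltn_ord c); rewrite e ltnn.
Qed.

Lemma sum_one_pos_eq m :
  \sum_(c : 'I_a) (one_pos c == m : nat) = [exists c : 'I_a, m == one_pos c].
Proof.
case: existsP => [[c0 /eqP e]|hne].
- rewrite (bigD1 c0) //= e eqxx big1 // => c hc.
  by have /negPf -> : one_pos c != one_pos c0 by apply: contra hc => /eqP /one_pos_inj ->.
- by rewrite big1 // => c _; case: eqP => // e; case: hne; exists c; rewrite e.
Qed.

Lemma ones_heights_word m : m <= a + b ->
  ones (cyclic_word heights_word) 0 m = \sum_(c : 'I_a) (one_pos c < m : nat).
Proof.
elim: m => [|m IH] hm; first by rewrite ones0 big1.
rewrite onesSr IH 1?ltnW // add0n (cyclic_word_ord _ (Ordinal hm)) ffunE.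
rewrite -sum_one_pos_eq -big_split; apply: eq_bigr => c _ /=.
by rewrite (ltnS (one_pos c) m) (leq_eqVlt (one_pos c)); case: ltngtP.
Qed.

Lemma count_one_pos_leq c M : c < a ->
  (\sum_(c' : 'I_a) (one_pos c' < M : nat) <= c) = (M <= one_pos c).
Proof.
move=> hc; rewrite leqNgt (eq_bigr (fun c' : 'I_a => ((c' < a) && (one_pos c' < M) : nat))).
  rewrite -(big_mkord xpredT (fun c' => ((c' < a) && (one_pos c' < M) : nat))).
  rewrite -decr_pred_sum //=.
    by rewrite hc /= ltnNge negbK.
  by move=> i /andP [hi hlt]; rewrite ltnW //= (ltn_trans _ hlt) // one_pos_lt.
by move=> c' _; rewrite ltn_ord.
Qed.

Lemma zeros_before_heights_word c : c < a ->
  zeros_before (cyclic_word heights_word) b c 0 = b - h c.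
Proof.
move=> hc; apply: (eq_leq_thresholds (zeros_before_leb _ _ _ _) (leq_subr _ _)) => K hK.
rewrite zeros_before_leq // ones_heights_word; last by lia.
by rewrite ltnNge count_one_pos_leq // /one_pos -ltnNge; apply/idP/idP; lia.
Qed.

Lemma heights_word_ideal : word_ideal a b (cyclic_word heights_word) (fun _ => 0) = stair a b h.
Proof.
by apply: eq_stair => c hc; rewrite /word_height zeros_before_heights_word // subKn ?h_le_b.
Qed.

Lemma heights_word_has_ones : has_ones heights_word a.
Proof.
rewrite /has_ones -ones_cyclic_word ones_heights_word // (eq_bigr (fun _ => 1)).
  by rewrite sum1_card card_ord.
by move=> c _; rewrite /one_pos; have := ltn_ord c; lia.
Qed.

End HeightsWord.

Section IdealHeights.

Variables (a b : nat) (I : {set 'I_a * 'I_b}).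
Hypothesis I_ideal : is_ideal I.

Definition in_col c j := [exists y in I, (y.1 == c :> nat) && (y.2 == j :> nat)].

Definition col_height c := \sum_(0 <= j < b) (in_col c j : nat).

Lemma in_col_mem (y : 'I_a * 'I_b) : in_col y.1 y.2 = (y \in I).
Proof.
apply/existsP/idP => [[z /and3P [hz /eqP e1 /eqP e2]]|hy]; last by exists y; rewrite hy !eqxx.
by have -> : y = z by case: y z e1 e2 hz => [y1 y2] [z1 z2] /= /val_inj -> /val_inj ->.
Qed.

Lemma in_col_down c c' j j' : c' <= c -> j' <= j -> in_col c j -> in_col c' j'.
Proof.
move=> hc hj /existsP [y /and3P [hy /eqP e1 /eqP e2]].
have h1 : c' < a by rewrite (leq_ltn_trans hc) // -e1.
have h2 : j' < b by rewrite (leq_ltn_trans hj) // -e2.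
apply/existsP; exists (Ordinal h1, Ordinal h2); rewrite /= !eqxx !andbT.
move: I_ideal => /forallP /(_ y) /forallP /(_ (Ordinal h1, Ordinal h2)) /implyP; apply.
by rewrite hy /Qle /= e1 e2 hc hj.
Qed.

Lemma mem_col_height (y : 'I_a * 'I_b) : (y \in I) = (y.2 < col_height y.1).
Proof.
by rewrite -in_col_mem /col_height -decr_pred_sum // => j; apply: in_col_down.
Qed.

Lemma col_height_leb c : col_height c <= b.
Proof. by have := sum_bool_leq (in_col c) 0 b; rewrite subn0. Qed.

Lemma col_height_nonincr : nonincr a col_height.
Proof.
move=> c _; apply: leq_sum => j _.
by case h: (in_col c.+1 j); rewrite // (in_col_down (leqnSn c) (leqnn j) h).
Qed.

Lemma ideal_stair : stair a b col_height = I.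
Proof. by apply/setP => y; rewrite inE mem_col_height. Qed.

End IdealHeights.

Lemma ideal_word_has_ones a b (I : {set 'I_a * 'I_b}) : is_ideal I ->
  has_ones (heights_word a b (col_height I)) a.
Proof.
move=> hI; apply: heights_word_has_ones (col_height_nonincr hI) _ => c _.
exact: col_height_leb.
Qed.

Lemma ideal_word_inj a b (I J : {set 'I_a * 'I_b}) : is_ideal I -> is_ideal J ->
  heights_word a b (col_height I) = heights_word a b (col_height J) -> I = J.
Proof.
have stairE (K : {set 'I_a * 'I_b}) : is_ideal K -> stair a b (col_height K) =
    word_ideal a b (cyclic_word (heights_word a b (col_height K))) (fun _ => 0).
  move=> hK; rewrite heights_word_ideal //; first exact: col_height_nonincr.
  by move=> c _; apply: col_height_leb.
by move=> hI hJ e; rewrite -(ideal_stair hI) -(ideal_stair hJ) !stairE // e.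
Qed.

Section WordsAndIdeals.

Variables (a b : nat) (nu : {perm 'I_a}).
Hypotheses (a_gt0 : 0 < a) (b_gt0 : 0 < b).

Let word := {ffun 'I_(a + b) -> bool}.

Let ideal_of (w : word) := word_ideal a b (cyclic_word w) (base_offsets nu).

Lemma has_ones_cyclic_word (w : word) : has_ones w a -> ones (cyclic_word w) 0 (a + b) = a.
Proof. by rewrite ones_cyclic_word => /eqP. Qed.

Lemma iter_comotion_ideal_of (w : word) t : has_ones w a ->
  iter t (comotion nu) (ideal_of w) =
  word_ideal a b (cyclic_word w) (fun c => base_offsets nu c + t).
Proof.
move=> hw; apply: iter_comotion_word_ideal (base_offsets_comotion nu) => //.
- exact: cyclic_word_periodic.
- exact: has_ones_cyclic_word.
Qed.

Lemma ideal_of_inj (w w' : word) : has_ones w a -> has_ones w' a ->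
  ideal_of w = ideal_of w' -> w = w'.
Proof.
move=> hw hw' e.
have hb1 : b.-1 < b by rewrite prednK.
pose corner : 'I_a * 'I_b := (Ordinal a_gt0, Ordinal hb1).
have same t : cyclic_word w (base_offsets nu 0 + t) = cyclic_word w' (base_offsets nu 0 + t).
  have := congr1 (iter t (comotion nu)) e; rewrite !iter_comotion_ideal_of // => /setP /(_ corner).
  by rewrite !(mem_corner_word_ideal (has_ones_cyclic_word _) b_gt0).
apply/ffunP => j; have := same (j + base_offsets nu 0 * (a + b).-1).
have -> : base_offsets nu 0 + (j + base_offsets nu 0 * (a + b).-1) =
          j + base_offsets nu 0 * (a + b).
  by rewrite addnCA [base_offsets nu 0 + _]addnC -mulnSr prednK // addn_gt0 a_gt0.
by rewrite !cyclic_word_mul_period !cyclic_word_ord.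
Qed.

(* Ideals inject into words with [a] ones, and [ideal_of] injects these words back
   into ideals; by counting, [ideal_of] is onto. *)
Lemma ideal_of_onto I : is_ideal I -> exists2 w : word, has_ones w a & I = ideal_of w.
Proof.
move=> hI.
pose V := [set w : word | has_ones w a].
pose ID := [set J : {set 'I_a * 'I_b} | is_ideal J].
have card_ID : #|ID| <= #|V|.
  rewrite -(@card_in_imset _ _ (fun J => heights_word a b (col_height J)) ID).
    apply/subset_leq_card/subsetP => w /imsetP [J]; rewrite !inE => hJ ->.
    exact: ideal_word_has_ones.
  by move=> J J'; rewrite !inE; apply: ideal_word_inj.
have card_img : #|ideal_of @: V| = #|V|.
  by apply: card_in_imset => w w'; rewrite !inE; apply: ideal_of_inj.
have img_sub : ideal_of @: V \subset ID.
  apply/subsetP => J /imsetP [w]; rewrite !inE => hw ->.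
  apply: (word_ideal_ideal (cyclic_word_periodic w) (has_ones_cyclic_word hw) b_gt0).
  exact/comotion_offsets_admissible/base_offsets_comotion.
have img_eq : ideal_of @: V = ID by apply/eqP; rewrite eqEcard img_sub card_img card_ID.
have : I \in ideal_of @: V by rewrite img_eq inE.
by case/imsetP => w; rewrite inE; exists w.
Qed.

End WordsAndIdeals.

Theorem mainTheorem11 (a b : nat) (ha : (0 < a)%N) (hb : (0 < b)%N)
  (nu : {perm 'I_a}) (x : 'I_a * 'I_b) :
  zero_mesic_on_ideals (@comotion a b nu) (hstat x).
Proof.
move=> I hI; have [w hw ->] := ideal_of_onto nu ha hb hI.
have w_periodic := cyclic_word_periodic w; have w_ones := has_ones_cyclic_word hw.
apply: (sum_fconnect_eq0 (n := a + b)); first by rewrite addn_gt0 ha.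
- by rewrite iter_comotion_ideal_of // word_ideal_periodic.
- under eq_bigr do rewrite iter_comotion_ideal_of //.
  exact: sum_hstat_period.
Qed.
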